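(* For integers $n\ge2$, $0<k<n$ and $0<i\le n$, the number of directed paths in $\Gamma$ from $(i,0)$ to $(n,k)$ is $$\pi(n,k,i)=\sum_{s=0}^{\min\{k,\,n-i\}}\binom{k}{s}\binom{n-k}{n-i-s}\,\pi(n-i,s,0).$$
   Context: Let $\Gamma$ be the directed graph whose nodes are the pairs $(n,k)$ of integers with $n\ge k\ge 0$, and whose edges are, for all $n\ge k\ge 0$: $(n+1,k)\to(n+1,k+1)$ and $(n,n-k)\to(n+1,k+1)$. $\pi(n,k,i)$ denotes the number of directed paths in $\Gamma$ from $(i,0)$ to $(n,k)$, where the trivial path counts when $(i,0)=(n,k)$ (so $\pi(0,0,0)=1$, and $\pi(m,0,0)=0$ for $m\ge1$). *)

From HB Require Import structures.
From mathcomp Require Import all_boot finmap.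
From mathcomp Require Import boolp classical_sets cardinality.

Set Implicit Arguments.
Unset Strict Implicit.
Unset Printing Implicit Defensive.

Local Open Scope classical_set_scope.

(* Nodes of Gamma are pairs (n,k) with n >= k >= 0. *)
Definition node := (nat * nat)%type.

Definition edge (a b : node) : Prop :=
  exists n k, (k <= n)%N /\
    ((a = (n.+1, k) /\ b = (n.+1, k.+1)) \/ (a = (n, n - k) /\ b = (n.+1, k.+1))).

(* A directed path from u to v: the vertex sequence u :: p, with consecutive
   vertices joined by edges and last vertex v.  p = [::] is the trivial path. *)
Definition is_dpath (u v : node) (p : seq node) : Prop :=
  last u p = v /\
  forall j, (j < size p)%N -> edge (nth u (u :: p) j) (nth u p j).

(* pi n k i = number of directed paths from (i,0) to (n,k)
   (the cardinality of the set of such paths; this set is finite). *)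
Definition piG (n k i : nat) : nat :=
  #|` fset_set [set p : seq node | is_dpath (i, 0) (n, k) p] |.

From mathcomp Require Import all_boot finmap zify.
From mathcomp Require Import boolp classical_sets cardinality.

Set Implicit Arguments.
Unset Strict Implicit.
Unset Printing Implicit Defensive.

Local Open Scope classical_set_scope.

(* A path into (m+1, j+1) ends with an edge from (m+1, j) or from (m, m-j),
   which gives the recurrence
     pi(m+1, j+1, i) = pi(m+1, j, i) + pi(m, m-j, i),
   with pi(m, 0, i) = [m = i] and pi(m, j, i) = 0 for m < i.  Writing n = i + d,
   the right-hand side
     C(d, r, k) = sum_a binom(k, a) binom(r, d-a) pi(d, a, 0),  r = n - k,
   satisfies the same recurrence in (d, k): by Pascal's rule in both binomials,
     C(d+1, r, k+1) = C(d+1, r+1, k) + C(d, k, r),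
   where the reversed convolution C(d, k, r) appears through the term
   pi(d+1, a+1, 0) - pi(d+1, a, 0) = pi(d, d-a, 0).  Induction on d and then on k
   identifies both sides. *)

Definition edgeb (a b : node) : bool :=
  [&& 0 < b.1, 0 < b.2, b.2 <= b.1 &
     (a == (b.1, b.2.-1)) || (a == (b.1.-1, b.1 - b.2))].

Lemma edgeP a b : edge a b <-> edgeb a b.
Proof.
split.
  case=> n [k [kn [[-> ->]|[-> ->]]]]; rewrite /edgeb /= ltnS kn /=.
    by rewrite eqxx.
  by rewrite subSS eqxx orbT.
case: a b => a1 a2 [[|m] [|j]] //; rewrite /edgeb /= => /andP[jm /orP[]] /eqP[-> ->].
  by exists m, j; split => //; left.
by exists m, j; split => //; right; rewrite subSS.
Qed.

Lemma dpathP u v p : is_dpath u v p <-> path edgeb u p /\ last u p = v.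
Proof.
split; first by case=> hl hn; split => //; apply/(pathP u) => j /hn /edgeP.
by case=> /(pathP u) hp hl; split => // j /hp /edgeP.
Qed.

Section PathEnumeration.

Variable i : nat.

Fixpoint dpaths (m : nat) : nat -> seq (seq node) :=
  fix dpaths_m j := match j with
  | 0 => if m == i then [:: [::]] else [::]
  | j'.+1 =>
    if j'.+1 <= m then
      [seq rcons p (m, j'.+1) | p <- dpaths_m j'] ++
      if m is m'.+1 then [seq rcons p (m, j'.+1) | p <- dpaths m' (m' - j')]
      else [::]
    else [::]
  end.

Lemma dpaths0 m : dpaths m 0 = if m == i then [:: [::]] else [::].
Proof. by case: m. Qed.

Lemma dpaths_sound m j p :
  p \in dpaths m j -> path edgeb (i, 0) p /\ last (i, 0) p = (m, j).
Proof.
elim: m j p => [|m IHm] j p.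
  case: j => [|j] //=; case: eqP => // <-.
  by rewrite inE => /eqP ->.
elim: j p => [|j IHj] p /=.
  by case: eqP => // <-; rewrite inE => /eqP ->.
case: ifP => // jm; rewrite mem_cat => /orP[] /mapP[q /[swap] -> ].
  case/IHj => hp hl.
  by rewrite rcons_path last_rcons hp hl /edgeb /= jm eqxx.
case/IHm => hp hl.
by rewrite rcons_path last_rcons hp hl /edgeb /= jm subSS eqxx orbT.
Qed.

Lemma dpaths_complete m j p :
  path edgeb (i, 0) p -> last (i, 0) p = (m, j) -> p \in dpaths m j.
Proof.
elim/last_ind: p m j => [|q v IHq] m j.
  by move=> _ [<- <-]; rewrite dpaths0 eqxx inE.
rewrite rcons_path last_rcons => /andP[hq] /[swap] ->.
case: m j => [|m] [|j] //; rewrite /edgeb /= => /andP[jm /orP[]] /eqP hl;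
  rewrite jm mem_cat; apply/orP; [left | right]; apply/mapP; exists q => //.
  exact: IHq _ _ hq hl.
by apply: IHq; rewrite // hl subSS.
Qed.

Lemma dpaths_uniq m j : uniq (dpaths m j).
Proof.
elim: m j => [|m IHm] j; first by case: j => [|j] //=; case: eqP.
elim: j => [|j IHj] /=; first by case: eqP.
case: ifP => // jm.
rewrite cat_uniq !(map_inj_uniq (@rcons_injl _ _)) IHj IHm andbT /=.
apply/hasPn => _ /mapP[q qin ->]; apply/negP => /mapP[q' q'in eq_rcons].
have eqq : q = q' by exact: rcons_injl eq_rcons.
have [_ last_q] := dpaths_sound qin.
have [_ last_q'] := dpaths_sound (m := m.+1) (j := j) q'in.
by move: last_q; rewrite eqq last_q' => -[]; lia.
Qed.

Lemma piG_size m j : piG m j i = size (dpaths m j).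
Proof.
rewrite /piG.
have -> : [set p | is_dpath (i, 0) (m, j) p] = [set` [fset p in dpaths m j]%fset].
  apply/seteqP; split => p /=; rewrite inE.
    by case/dpathP; apply: dpaths_complete.
  by case/dpaths_sound => hp hl; apply/dpathP.
by rewrite set_fsetK card_fseq undup_id ?dpaths_uniq.
Qed.

End PathEnumeration.

Lemma piG0 m i : piG m 0 i = (m == i).
Proof. by rewrite piG_size dpaths0; case: eqP. Qed.

Lemma piG_recS m j i :
  j <= m -> piG m.+1 j.+1 i = piG m.+1 j i + piG m (m - j) i.
Proof. by move=> jm; rewrite !piG_size /= ltnS jm size_cat !size_map; case: j jm. Qed.

Lemma piG_small m j i : m < i -> piG m j i = 0.
Proof.
rewrite piG_size; elim: m j => [|m IHm] j mi.
  by case: j => [|j] //=; case: eqP => // e; rewrite -e in mi.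
elim: j => [|j IHj] /=; first by case: eqP => // e; rewrite e ltnn in mi.
by case: ifP => // _; rewrite size_cat !size_map IHj IHm // ltnW.
Qed.

Lemma piG_diag i k : k <= i -> piG i k i = 1.
Proof.
elim: k => [|k IHk] ki; first by rewrite piG0 eqxx.
case: i ki IHk => // i ki IHk.
by rewrite piG_recS // IHk 1?ltnW // piG_small.
Qed.

Lemma sum_binS_l k e (F : nat -> nat) :
  \sum_(0 <= a < e.+1) 'C(k.+1, a) * F a =
  \sum_(0 <= a < e.+1) 'C(k, a) * F a + \sum_(0 <= a < e) 'C(k, a) * F a.+1.
Proof.
rewrite !big_nat_recl // !bin0.
under eq_bigr do rewrite binS mulnDl.
by rewrite big_split /=; lia.
Qed.

Lemma sum_binS_r r e (F : nat -> nat) :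
  \sum_(0 <= a < e.+2) 'C(r.+1, e.+1 - a) * F a =
  \sum_(0 <= a < e.+2) 'C(r, e.+1 - a) * F a +
  \sum_(0 <= a < e.+1) 'C(r, e - a) * F a.
Proof.
rewrite [LHS]big_nat_recr // [X in _ = X + _]big_nat_recr //= subnn !bin0.
rewrite addnAC -big_split /=.
congr (_ + _); apply: eq_big_nat => a /andP[_ ae].
by rewrite subSn // binS mulnDl.
Qed.

Definition conv_pi0 (d r k : nat) : nat :=
  \sum_(0 <= a < d.+1) 'C(k, a) * 'C(r, d - a) * piG d a 0.

Lemma conv_pi0S d r k :
  conv_pi0 d.+1 r k.+1 = conv_pi0 d.+1 r.+1 k + conv_pi0 d k r.
Proof.
rewrite /conv_pi0.
under eq_bigr do rewrite -mulnA.
under [in RHS]eq_bigr do rewrite -mulnA mulnCA.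
rewrite sum_binS_l sum_binS_r -!addnA; congr (_ + _).
  by apply: eq_bigr => a _; rewrite mulnCA.
have recS a : 0 <= a < d.+1 ->
    'C(k, a) * ('C(r, d.+1 - a.+1) * piG d.+1 a.+1 0) =
    'C(r, d - a) * ('C(k, a) * piG d.+1 a 0) + 'C(k, a) * ('C(r, d - a) * piG d (d - a) 0).
  by move=> /andP[_ ad]; rewrite subSS piG_recS // !mulnDr mulnCA.
rewrite (eq_big_nat _ _ (fun a => recS a)) big_split /=; congr (_ + _).
rewrite big_nat_rev /=; apply: eq_big_nat => a /andP[_ ad].
by rewrite add0n subSS subKn // mulnCA mulnA.
Qed.

Lemma piG_addl_conv i d k : k <= i + d -> piG (i + d) k i = conv_pi0 d (i + d - k) k.
Proof.
elim: d k => [|d IHd] k.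
  by rewrite addn0 => ki; rewrite piG_diag // /conv_pi0 big_nat1 !bin0 piG0.
rewrite addnS; elim: k => [|k IHk] kid.
  rewrite piG0 /conv_pi0 big_nat_recl // piG0 muln0 big1 => [|a _]; last by rewrite bin0n.
  by case: eqP => //; lia.
rewrite piG_recS // IHk 1?ltnW // IHd ?leq_subr // subKn // subSS subSn //.
by rewrite conv_pi0S.
Qed.

Lemma piG_conv n k i : i <= n -> k <= n ->
  piG n k i = \sum_(0 <= s < (n - i).+1) 'C(k, s) * 'C(n - k, n - i - s) * piG (n - i) s 0.
Proof. by move=> le_in le_kn; rewrite -{1 3}(subnKC le_in) piG_addl_conv ?subnKC. Qed.

Theorem proposition4 (n k i : nat) :
  (2 <= n)%N -> (0 < k < n)%N -> (0 < i <= n)%N ->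
  piG n k i =
  (\sum_(0 <= s < (minn k (n - i)).+1)
      'C(k, s) * 'C(n - k, n - i - s) * piG (n - i) s 0)%N.
Proof.
(* Only k <= n and i <= n matter; the terms with s > k vanish. *)
move=> _ /andP[_ /ltnW le_kn] /andP[_ le_in].
rewrite piG_conv //; case: (leqP k (n - i)) => // le_k_ni.
rewrite (big_cat_nat _ (n := k.+1)) //= [X in _ + X]big_nat_cond.
by rewrite [X in _ + X]big1 ?addn0 // => s /andP[/andP[lt_ks _] _]; rewrite bin_small.
Qed.
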